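(* Let $\widehat{\mathscr{O}}$ be a commutative local principal ideal ring, complete with respect to its maximal ideal $\mathfrak{m}=(\pi)$, whose residue field $k$ has characteristic different from $2$. Let $A\in \mathrm{GL}_n(\widehat{\mathscr{O}})$ be cyclic, i.e. its reduction $\overline{A}\in\mathrm{M}_n(k)$ is a cyclic matrix. For $i\ge1$ let $\mathscr{O}_i=\widehat{\mathscr{O}}/\pi^i\widehat{\mathscr{O}}$ and let $A_i$ be the image of $A$ in $\mathrm{M}_n(\mathscr{O}_i)$. Then for every $j\in\mathbb N$, the null ideal $N^{\mathscr{O}_{j+1}}_{A_{j+1}}=\{G\in\mathscr{O}_{j+1}[t]:G(A_{j+1})=0\}$ is principal, generated by the characteristic polynomial $\chi(A_{j+1})(t)$ of $A_{j+1}$ (which is the reduction of the characteristic polynomial $\chi(A)(t)$ of $A$); moreover, $\chi(A_{j+1})(t)=\mathrm{Min}_{\mathscr{O}_{j+1},A_{j+1}}(t)$, i.e. $\chi(A_{j+1})(t)$ is the monic polynomial of least degree in $\mathscr{O}_{j+1}[t]$ annihilating $A_{j+1}$.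
   Context: A matrix $X\in\mathrm{M}_n(k)$ over a field is cyclic if $k^n$, viewed as a $k[t]$-module via $X$, is a cyclic module. A matrix over $\widehat{\mathscr O}$ is called cyclic if its reduction modulo $\mathfrak m$ is cyclic. $\mathrm{Min}_{\mathscr R,X}$ denotes the minimal (least-degree monic) annihilating polynomial of $X$ over $\mathscr R$. *)

From HB Require Import structures.
From mathcomp Require Import all_boot all_algebra.
Set Implicit Arguments. Unset Strict Implicit. Unset Printing Implicit Defensive.
Import GRing.Theory.
Local Open Scope ring_scope.

(* Evaluation G(X) of a polynomial at a square matrix (any size n, incl. 0):
   G(X) = sum_i G_i X^i.  (Agrees with mxpoly's horner_mx when n > 0.) *)
Definition mx_eval (R : comNzRingType) (n : nat) (X : 'M[R]_n) (p : {poly R})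
  : 'M[R]_n := \sum_(i < size p) p`_i *: X ^+ i.

Definition pmul (R : comNzRingType) (d x : R) : Prop := exists y, x = d * y.

Definition is_ideal (R : comNzRingType) (I : R -> Prop) : Prop :=
  [/\ I 0, (forall x y, I x -> I y -> I (x + y)) & (forall r x, I x -> I (r * x))].

Definition principal_ideal_ring (R : comNzRingType) : Prop :=
  forall I : R -> Prop, is_ideal I -> exists g : R, forall x, I x <-> pmul g x.

Definition local_with_maximal_ideal (R : comUnitRingType) (pi : R) : Prop :=
  forall x : R, x \isn't a GRing.unit <-> pmul pi x.

Definition pi_adic_complete (R : comNzRingType) (pi : R) : Prop :=
  forall a : nat -> R, (forall k, pmul (pi ^+ k) (a k.+1 - a k)) ->
    exists l : R, forall k, pmul (pi ^+ k) (l - a k).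

Definition is_quotient_by (R S : comNzRingType) (f : {rmorphism R -> S}) (d : R)
  : Prop := (forall s : S, exists r : R, f r = s) /\
            (forall r : R, f r = 0 <-> pmul d r).

(* X in M_n(k) is cyclic: k^n (column vectors, X acting by left
   multiplication) is a cyclic k[t]-module, i.e. generated by one vector v. *)
Definition cyclic_mx (k : fieldType) (n : nat) (X : 'M[k]_n) : Prop :=
  exists v : 'cV[k]_n, forall w : 'cV[k]_n,
    exists p : {poly k}, w = mx_eval X p *m v.

Definition is_min_poly (S : comNzRingType) (n : nat) (X : 'M[S]_n) (p : {poly S})
  : Prop :=
  [/\ p \is monic, mx_eval X p = 0 &
      forall q : {poly S}, q \is monic -> mx_eval X q = 0 -> (size p <= size q)%N].

From mathcomp Require Import all_boot all_algebra ring.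
Import GRing.Theory.
Local Open Scope ring_scope.
Set Implicit Arguments. Unset Strict Implicit.

(* If v is a cyclic vector of the reduction of A, a lift of v to R has Krylov
   matrix [v, Av, ..., A^(n-1) v] whose determinant reduces to a nonzero
   element of k, hence is a unit of the local ring R; its image in any
   quotient S is therefore still invertible.  A nonzero polynomial of degree
   < n cannot annihilate A_(j+1), since its coefficient vector would be
   killed by an invertible matrix.  Dividing an annihilating polynomial by the
   monic characteristic polynomial and applying Cayley-Hamilton then shows
   that the remainder vanishes. *)

Section PolynomialsOfMatrices.

Variable R : comNzRingType.

Lemma mx_eval_horner n (X : 'M[R]_n.+1) (p : {poly R}) :
  mx_eval X p = horner_mx X p.
Proof.
rewrite /mx_eval -[in RHS](coefK p) poly_def linear_sum /=.
by apply: eq_bigr => i _; rewrite linearZ /= rmorphXn /= horner_mx_X.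
Qed.

Lemma mx_evalD n (X : 'M[R]_n) (p q : {poly R}) :
  mx_eval X (p + q) = mx_eval X p + mx_eval X q.
Proof.
case: n X => [|n] X; first by rewrite !flatmx0.
by rewrite !mx_eval_horner rmorphD.
Qed.

Lemma mx_evalM n (X : 'M[R]_n) (p q : {poly R}) :
  mx_eval X (p * q) = mx_eval X p * mx_eval X q.
Proof.
case: n X => [|n] X; first by rewrite !flatmx0.
by rewrite !mx_eval_horner rmorphM.
Qed.

Lemma mx_eval_char_poly n (X : 'M[R]_n) : mx_eval X (char_poly X) = 0.
Proof.
case: n X => [|n] X; first by rewrite !flatmx0.
by rewrite mx_eval_horner Cayley_Hamilton.
Qed.

Lemma size_rmodp_char_poly n (X : 'M[R]_n) (p : {poly R}) :
  (size (Pdiv.Ring.rmodp p (char_poly X)) <= n)%N.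
Proof.
have := Pdiv.Ring.ltn_rmodpN0 p (monic_neq0 (char_poly_monic X)).
by rewrite size_char_poly.
Qed.

Lemma mx_eval_rmodp_char_poly n (X : 'M[R]_n) (p : {poly R}) :
  mx_eval X p = mx_eval X (Pdiv.Ring.rmodp p (char_poly X)).
Proof.
rewrite {1}(Pdiv.RingMonic.rdivp_eq (char_poly_monic X) p).
by rewrite mx_evalD mx_evalM mx_eval_char_poly mulr0 add0r.
Qed.

Definition krylov_mx n (X : 'M[R]_n) (v : 'cV[R]_n) : 'M[R]_n :=
  \matrix_(i, j) (X ^+ j *m v) i 0.

Definition poly_col n (p : {poly R}) : 'cV[R]_n := \col_j p`_j.

Lemma mx_eval_mulmx_krylov n (X : 'M[R]_n) v (p : {poly R}) :
  (size p <= n)%N ->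
  mx_eval X p *m v = krylov_mx X v *m poly_col n p.
Proof.
move=> szp; apply/matrixP => i j; rewrite /mx_eval mulmx_suml summxE !mxE.
rewrite (big_ord_widen n (fun l => ((p`_l *: X ^+ l) *m v) i j)) //.
rewrite big_mkcond /=; apply: eq_bigr => l _; rewrite !mxE ord1.
case: ifP => [_ | ltNl]; last by rewrite nth_default ?mulr0 // leqNgt ltNl.
by rewrite mulr_suml; apply: eq_bigr => m _; rewrite mxE; ring.
Qed.

Lemma poly_col_eq0 n (p : {poly R}) :
  (size p <= n)%N -> poly_col n p = 0 -> p = 0.
Proof.
move=> szp /matrixP p0; apply/polyP => l; rewrite coef0.
have [ltln | ] := ltnP l n; first by have := p0 (Ordinal ltln) 0; rewrite !mxE.
by move=> le_nl; rewrite nth_default // (leq_trans szp).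
Qed.

(* Invertibility of the Krylov matrix is expressed by a left inverse because
   the quotients S are only comNzRingTypes, where unitmx is unavailable; over
   a commutative ring a left inverse is two-sided anyway. *)
Definition has_cyclic_basis n (X : 'M[R]_n) : Prop :=
  exists v (B : 'M[R]_n), B *m krylov_mx X v = 1%:M.

Lemma has_cyclic_basis_small_annihilator n (X : 'M[R]_n) (p : {poly R}) :
  has_cyclic_basis X -> (size p <= n)%N -> mx_eval X p = 0 -> p = 0.
Proof.
move=> [v [B BK1]] szp Xp0; apply: (poly_col_eq0 szp).
rewrite -[poly_col _ _]mul1mx -BK1 -mulmxA -mx_eval_mulmx_krylov //.
by rewrite Xp0 mul0mx mulmx0.
Qed.

Lemma has_cyclic_basis_annihilatorP n (X : 'M[R]_n) G : has_cyclic_basis X ->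
  mx_eval X G = 0 <-> exists Q, G = Q * char_poly X.
Proof.
move=> cycX; split => [XG0 | [Q ->]]; last first.
  by rewrite mx_evalM mx_eval_char_poly mulr0.
exists (Pdiv.Ring.rdivp G (char_poly X)).
have rem0 : Pdiv.Ring.rmodp G (char_poly X) = 0.
  apply: (has_cyclic_basis_small_annihilator cycX (size_rmodp_char_poly X G)).
  by rewrite -mx_eval_rmodp_char_poly.
by rewrite {1}(Pdiv.RingMonic.rdivp_eq (char_poly_monic X) G) rem0 addr0.
Qed.

Lemma has_cyclic_basis_min_poly n (X : 'M[R]_n) :
  has_cyclic_basis X -> is_min_poly X (char_poly X).
Proof.
move=> cycX; split; [exact: char_poly_monic | exact: mx_eval_char_poly |].
move=> q monq Xq0; rewrite size_char_poly ltnNge; apply/negP => szq.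
have q0 := has_cyclic_basis_small_annihilator cycX szq Xq0.
by move: (monic_neq0 monq); rewrite q0 eqxx.
Qed.

End PolynomialsOfMatrices.

Lemma map_krylov_mx (R S : comNzRingType) (f : {rmorphism R -> S}) n
    (X : 'M[R]_n) v :
  map_mx f (krylov_mx X v) = krylov_mx (map_mx f X) (map_mx f v).
Proof.
apply/matrixP => i j; rewrite !mxE -rmorphXn rmorph_sum.
by apply: eq_bigr => l _; rewrite rmorphM !mxE.
Qed.

Lemma has_cyclic_basis_map (R S : comNzRingType) (f : {rmorphism R -> S}) n
    (X : 'M[R]_n) :
  has_cyclic_basis X -> has_cyclic_basis (map_mx f X).
Proof.
case=> v [B BK1]; exists (map_mx f v), (map_mx f B).
by rewrite -map_krylov_mx -map_mxM BK1 map_mx1.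
Qed.

Lemma cyclic_mx_has_cyclic_basis (k : fieldType) n (X : 'M[k]_n) :
  cyclic_mx X -> has_cyclic_basis X.
Proof.
case=> v genv; exists v.
have spanK (w : 'cV_n) : exists c, w = krylov_mx X v *m c.
  have [p ->] := genv w; exists (poly_col n (Pdiv.Ring.rmodp p (char_poly X))).
  by rewrite mx_eval_rmodp_char_poly mx_eval_mulmx_krylov ?size_rmodp_char_poly.
have [C KC] := fin_all_exists (fun j : 'I_n => spanK (col j 1%:M)).
have KC1 : krylov_mx X v *m \matrix_(i, j) C j i 0 = 1%:M.
  apply/matrixP => i j; have := congr1 (fun M : 'cV_n => M i 0) (KC j).
  by rewrite !mxE => ->; apply: eq_bigr => l _; rewrite mxE.
have [Kunit _] := mulmx1_unit KC1.
by exists (invmx (krylov_mx X v)); rewrite mulVmx.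
Qed.

Lemma map_mx_surj (T U : Type) (f : T -> U) :
    (forall u, exists t, f t = u) ->
  forall m n (M : 'M[U]_(m, n)), exists MT, map_mx f MT = M.
Proof.
move=> f_surj m n M.
have [g gE] := fin_all_exists (fun ij => f_surj (M ij.1 ij.2)).
by exists (\matrix_(i, j) g (i, j)); apply/matrixP => i j; rewrite !mxE gE.
Qed.

Section LocalRing.

Variables (R : comUnitRingType) (pi : R).
Variables (k : fieldType) (red : {rmorphism R -> k}).
Hypotheses (Rloc : local_with_maximal_ideal pi) (kRpi : is_quotient_by red pi).

Lemma unitmx_residue n (M : 'M[R]_n) : map_mx red M \in unitmx -> M \in unitmx.
Proof.
rewrite !unitmxE det_map_mx unitfE; apply: contraNT => /Rloc /(kRpi.2 _).2 ->.
by rewrite eqxx.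
Qed.

Lemma has_cyclic_basis_residue n (A : 'M[R]_n) :
  has_cyclic_basis (map_mx red A) -> has_cyclic_basis A.
Proof.
case=> v [B BK1]; have [_ Kunit] := mulmx1_unit BK1.
have [vR vRE] := map_mx_surj kRpi.1 v.
exists vR, (invmx (krylov_mx A vR)); apply: mulVmx; apply: unitmx_residue.
by rewrite map_krylov_mx vRE.
Qed.

End LocalRing.

Theorem corollary2p3
  (R : comUnitRingType) (pi : R)
  (Hpir : principal_ideal_ring R)
  (Hloc : local_with_maximal_ideal pi)
  (Hcompl : pi_adic_complete pi)
  (k : fieldType) (red : {rmorphism R -> k})
  (Hk : is_quotient_by red pi)
  (Hchar : (2%:R : k) != 0)
  (n : nat) (A : 'M[R]_n)
  (HA : A \in unitmx)
  (Hcyc : cyclic_mx (map_mx red A)) :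
  forall (j : nat) (S : comNzRingType) (f : {rmorphism R -> S}),
    is_quotient_by f (pi ^+ j.+1) ->
    let Aj := map_mx f A in
    [/\ char_poly Aj = map_poly f (char_poly A),
        (forall G : {poly S}, mx_eval Aj G = 0 <-> exists Q : {poly S}, G = Q * char_poly Aj)
      & is_min_poly Aj (char_poly Aj)].
Proof.
move=> j S f _ Aj.
have cycA := has_cyclic_basis_residue Hloc Hk (cyclic_mx_has_cyclic_basis Hcyc).
have cycAj : has_cyclic_basis Aj := has_cyclic_basis_map f cycA.
split; first by rewrite map_char_poly.
  by move=> G; exact: has_cyclic_basis_annihilatorP.
exact: has_cyclic_basis_min_poly.
Qed.
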